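(* Let $G$ be a connected graph of order $n_G$ and let $H$ be a connected subgraph of $G$ of order $n_H$. Then for each integer $k$ with $3\le k\le n_H$ we have $px_k(G)\le px_k(H)+n_G-n_H$, and for each integer $k$ with $n_H\le k\le n_G$ we have $px_k(G)\le px_{n_H}(H)+n_G-n_H$.
   Context: All graphs are finite, simple and undirected. An edge-coloring of a graph assigns colors to edges, adjacent edges being allowed to share a color. A tree $T$ in an edge-colored graph is a proper tree if no two adjacent edges of $T$ receive the same color. For a connected graph $G$ of order $n$, an integer $k$ with $2\le k\le n$ and a set $S\subseteq V(G)$, an $S$-tree is a tree in $G$ containing all vertices of $S$. An edge-coloring of $G$ is a $k$-proper coloring if for every $k$-element subset $S\subseteq V(G)$ there is a proper $S$-tree in $G$. The $k$-proper index $px_k(G)$ is the minimum number of colors in a $k$-proper coloring of $G$. *)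

From mathcomp Require Import all_boot.
From mathcomp Require Import boolp.
Set Implicit Arguments. Unset Strict Implicit. Unset Printing Implicit Defensive.

Definition simple_graph (T : finType) (V : {set T}) (adj : rel T) : Prop :=
  (forall x y, adj x y = adj y x) /\ (forall x, ~~ adj x x) /\
  (forall x y, adj x y -> (x \in V) && (y \in V)).

Definition connected_graph (T : finType) (V : {set T}) (adj : rel T) : Prop :=
  V != set0 /\ forall x y, x \in V -> y \in V -> connect adj x y.

(* Edges are unordered pairs {x,y}; an edge-coloring is a map c from
   2-subsets to colors. It uses (at most) m colors if every edge of the
   graph gets a color in {0,..,m-1}. *)
Definition coloring_with (T : finType) (adj : rel T) (c : {set T} -> nat) (m : nat) : Prop :=
  forall x y, adj x y -> c [set x; y] < m.

Definition is_tree (T : finType) (V : {set T}) (adj : rel T)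
    (W : {set T}) (F : {set {set T}}) : Prop :=
  [/\ W != set0, W \subset V,
      (forall e, e \in F -> exists x y, [/\ e = [set x; y], adj x y, x \in W & y \in W]),
      (forall x y, x \in W -> y \in W ->
          connect (fun u v => [set u; v] \in F) x y)
    & #|F| = #|W| - 1].

Definition proper_edges (T : finType) (c : {set T} -> nat) (F : {set {set T}}) : Prop :=
  forall e1 e2, e1 \in F -> e2 \in F -> e1 != e2 -> e1 :&: e2 != set0 -> c e1 != c e2.

Definition k_proper (T : finType) (V : {set T}) (adj : rel T) (k : nat)
    (c : {set T} -> nat) : Prop :=
  forall S : {set T}, S \subset V -> #|S| = k ->
    exists W F, [/\ is_tree V adj W F, S \subset W & proper_edges c F].

Definition k_proper_with (T : finType) (V : {set T}) (adj : rel T) (k m : nat) : Prop :=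
  exists c, coloring_with adj c m /\ k_proper V adj k c.

Lemma ex_asbool_helper (P : nat -> Prop) : (exists m, P m) -> exists m, `[< P m >].
Proof. by case=> m Pm; exists m; apply: asboolT. Qed.

(* px_k(V,adj): the minimum number of colors of a k-proper coloring
   (0 by convention if there is none, which does not occur for connected graphs). *)
Definition px (T : finType) (V : {set T}) (adj : rel T) (k : nat) : nat :=
  match pselect (exists m, k_proper_with V adj k m) with
  | left h => ex_minn (ex_asbool_helper h)
  | right _ => 0
  end.

(* Start from a k-proper coloring of H with px_k(H) colors and add the
   vertices outside H one at a time, each joined to the vertices already
   present by an edge of G that receives a fresh color.  A set S containing
   the new vertex v is handled by replacing v with its neighbour w, taking a
   proper tree for the smaller set and hanging v from w as a leaf; the fresh
   color keeps that tree proper.  The invariant carried along is the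
   existence of proper S-trees for all |S| <= k.  For k >= n_H one starts
   from an n_H-proper coloring of H instead: its trees span H, so the
   invariant then holds for sets of every size. *)
From mathcomp Require Import all_boot boolp zify.
Set Implicit Arguments. Unset Strict Implicit. Unset Printing Implicit Defensive.

Section ProperTrees.
Variable T : finType.
Implicit Types (V W S : {set T}) (F : {set {set T}}) (adj : rel T) (c : {set T} -> nat).

Definition recolor c (e0 : {set T}) (b : nat) (e : {set T}) : nat :=
  if e == e0 then b else c e.

Lemma recolor_notin c e0 b F : e0 \notin F -> {in F, recolor c e0 b =1 c}.
Proof. by move=> e0F e eF; rewrite /recolor; case: eqP => // ee; rewrite -ee eF in e0F. Qed.

Definition proper_tree_for V adj c (B : nat) S :=
  exists W F,
    [/\ is_tree V adj W F, S \subset W, proper_edges c F & {in F, forall e, c e < B}].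

Definition proper_upto V adj c (j B : nat) :=
  forall S, S \subset V -> #|S| <= j -> proper_tree_for V adj c B S.

Lemma tree_edge_sub V adj W F e : is_tree V adj W F -> e \in F -> e \subset W.
Proof.
case=> _ _ edgeF _ _ /edgeF [x [y [-> _ xW yW]]].
by apply/subsetP=> z; rewrite !inE => /orP[]/eqP->.
Qed.

Lemma is_tree_subset V V' adj W F :
  V \subset V' -> is_tree V adj W F -> is_tree V' adj W F.
Proof. by move=> sVV' [? sWV ? ? ?]; split=> //; apply: subset_trans sVV'. Qed.

Lemma is_tree_subrel V adj adj' W F :
  subrel adj adj' -> is_tree V adj W F -> is_tree V adj' W F.
Proof.
move=> sadj [? ? edgeF ? ?]; split=> // e /edgeF [x [y [-> xy xW yW]]].
by exists x, y; split=> //; apply: sadj.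
Qed.

Lemma edge_notin_tree V adj W F w v :
  is_tree V adj W F -> v \notin V -> [set w; v] \notin F.
Proof.
move=> tr vV; apply: contra vV => /(tree_edge_sub tr) /subsetP sW.
by case: tr => _ /subsetP sWV _ _ _; apply/sWV/sW; rewrite !inE eqxx orbT.
Qed.

Lemma is_tree_add_leaf V adj W F w v :
  is_tree V adj W F -> v \notin V -> w \in W -> adj w v ->
  is_tree (v |: V) adj (v |: W) ([set w; v] |: F).
Proof.
move=> tr vV wW wv; have [W0 sWV edgeF connF cardF] := tr.
have vW : v \notin W by apply: contra vV; apply: (subsetP sWV).
pose E := [rel x y | [set x; y] \in [set w; v] |: F].
have symE : connect_sym E.
  by apply: sym_connect_sym => x y /=; rewrite /E /= setUC.
have sFE : forall x y, connect (fun x y => [set x; y] \in F) x y -> connect E x y.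
  by apply: connect_sub => x y xy; apply: connect1; rewrite /E /= in_setU1 xy orbT.
have connw : forall x, x \in v |: W -> connect E x w.
  move=> x; rewrite in_setU1 => /orP[/eqP->|xW]; last exact/sFE/connF.
  by rewrite symE; apply: connect1; rewrite /E /= setU11.
split.
- by apply/set0Pn; exists v; rewrite setU11.
- exact: setUS.
- move=> e; rewrite in_setU1 => /orP[/eqP->|/edgeF [x [y [-> xy xW yW]]]].
    by exists w, v; rewrite !inE eqxx wW orbT.
  by exists x, y; rewrite !inE xW yW !orbT.
- by move=> x y xW yW; rewrite (connect_trans (connw x xW)) // symE connw.
- rewrite cardsU1 vW cardsU1 (edge_notin_tree w tr vV) cardF.
  by have := card_gt0 W; rewrite W0; lia.
Qed.

Lemma eq_proper_edges c c' F :
  {in F, c' =1 c} -> proper_edges c F -> proper_edges c' F.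
Proof. by move=> eqc pr e1 e2 e1F e2F; rewrite !eqc //; apply: pr. Qed.

Lemma proper_edges_fresh c F e0 b :
  proper_edges c F -> {in F, forall e, c e < b} -> e0 \notin F ->
  proper_edges (recolor c e0 b) (e0 |: F).
Proof.
move=> pr cb e0F e1 e2; have eqc := recolor_notin c b e0F.
rewrite !in_setU1; case/orP=> [/eqP->|e1F] /orP[/eqP->|e2F]; rewrite ?eqxx //.
- by rewrite (eqc e2) // /recolor eqxx => _ _; have := cb _ e2F; lia.
- by rewrite (eqc e1) // /recolor eqxx => _ _; have := cb _ e1F; lia.
- by rewrite !eqc //; apply: pr.
Qed.

Lemma proper_tree_for_subset V adj c B S S' :
  S' \subset S -> proper_tree_for V adj c B S -> proper_tree_for V adj c B S'.
Proof.
by move=> sS [W [F [tr sSW pr cB]]]; exists W, F; split=> //; apply: subset_trans sSW.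
Qed.

Lemma proper_tree_for_subrel V adj adj' c B S :
  subrel adj adj' -> proper_tree_for V adj c B S -> proper_tree_for V adj' c B S.
Proof.
by move=> sadj [W [F [tr ? ? ?]]]; exists W, F; split=> //; apply: is_tree_subrel tr.
Qed.

Section AddVertex.
Variables (V : {set T}) (adj : rel T) (c : {set T} -> nat) (B : nat) (w v : T).
Hypotheses (vV : v \notin V) (wv : adj w v).

Let c' := recolor c [set w; v] B.

Lemma proper_tree_for_add_vertex S :
  proper_tree_for V adj c B S -> proper_tree_for (v |: V) adj c' B.+1 S.
Proof.
case=> W [F [tr sSW pr cB]]; have eqc := recolor_notin c B (edge_notin_tree w tr vV).
exists W, F; split=> //.
- by apply: is_tree_subset tr; apply: subsetUr.
- exact: eq_proper_edges pr.
- by move=> e eF; rewrite /c' eqc // ltnS ltnW ?cB.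
Qed.

Lemma proper_tree_for_add_leaf S :
  w \in S -> proper_tree_for V adj c B S -> proper_tree_for (v |: V) adj c' B.+1 (v |: S).
Proof.
move=> wS [W [F [tr sSW pr cB]]]; have vF := edge_notin_tree w tr vV.
exists (v |: W), ([set w; v] |: F); split.
- by apply: is_tree_add_leaf => //; apply: (subsetP sSW).
- exact: setUS.
- exact: proper_edges_fresh.
- move=> e; rewrite in_setU1 => /orP[/eqP->|eF]; first by rewrite /c' /recolor eqxx.
  by rewrite /c' (recolor_notin _ _ vF) // ltnS ltnW ?cB.
Qed.

Lemma proper_upto_add_vertex j :
  w \in V -> proper_upto V adj c j B -> proper_upto (v |: V) adj c' j B.+1.
Proof.
move=> wV P S sSV cardS; case vS: (v \in S).
- pose S' := w |: (S :\ v).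
  have sS'V : S' \subset V.
    rewrite subUset sub1set wV; apply/subsetP=> x; rewrite !inE => /andP[xv xS].
    by have := subsetP sSV x xS; rewrite !inE (negbTE xv).
  have cardS' : #|S'| <= j.
    by rewrite /S'; move: (cardsD1 v S) (cardsU1 w (S :\ v)); rewrite vS; lia.
  apply: proper_tree_for_subset (proper_tree_for_add_leaf (setU11 _ _) (P _ sS'V cardS')).
  by apply/subsetP=> x xS; rewrite !inE; case: eqP => //= _; rewrite xS orbT.
- apply/proper_tree_for_add_vertex/P => //; apply/subsetP=> x xS.
  by move: (subsetP sSV x xS); rewrite in_setU1; case: eqP => // xv; rewrite -xv xS in vS.
Qed.

End AddVertex.

Lemma connect_cross (e : rel T) V x y :
  connect e x y -> x \in V -> y \notin V -> exists u z, [/\ u \in V, z \notin V & e u z].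
Proof.
case/connectP=> p; elim: p x => [|z p IH] x /=; first by move=> _ -> ->.
case/andP=> xz pz yl xV yV; case zV: (z \in V); first exact: IH pz yl zV yV.
by exists x, z; rewrite zV.
Qed.

Lemma proper_upto_grow U adj V c j B :
  simple_graph U adj -> connected_graph U adj -> V \subset U -> V != set0 ->
  proper_upto V adj c j B -> exists c', proper_upto U adj c' j (B + (#|U| - #|V|)).
Proof.
move=> [_ [_ adjU]] [_ connU]; move eqn: (#|U| - #|V|) => n.
elim: n V c B eqn => [|n IH] V c B eqn sVU V0 P.
  have eVU : V = U by apply/eqP; rewrite eqEcard sVU; lia.
  by exists c; rewrite addn0 -eVU.
have /subsetPn [y yU yV] : ~~ (U \subset V).
  by apply/negP => /subset_leq_card; lia.
have [x xV] := set0Pn _ V0.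
have [u [z [uV zV uz]]] := connect_cross (connU x y (subsetP sVU x xV) yU) xV yV.
have zU : z \in U by case/andP: (adjU _ _ uz).
have [|||c' P'] := IH (z |: V) _ B.+1 _ _ _ (proper_upto_add_vertex zV uz uV P).
- by rewrite cardsU1 zV; lia.
- by rewrite subUset sub1set zU.
- by apply/set0Pn; exists z; rewrite setU11.
by exists c'; rewrite addnS.
Qed.

Lemma proper_upto_set1 adj c j x : proper_upto [set x] adj c j 0.
Proof.
move=> S sSx _; exists [set x], set0; split=> //; last by move=> e; rewrite in_set0.
- split=> //; first by apply/set0Pn; exists x; rewrite set11.
  + by move=> e; rewrite in_set0.
  + by move=> y z; rewrite !inE => /eqP-> /eqP->.
  + by rewrite cards0 cards1.
- by move=> e1; rewrite in_set0.
Qed.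

Lemma proper_upto_full V adj c j B :
  proper_upto V adj c #|V| B -> proper_upto V adj c j B.
Proof. by move=> P S sSV _; apply: P sSV (subset_leq_card sSV). Qed.

Lemma proper_upto_subrel V adj adj' c j B :
  subrel adj adj' -> proper_upto V adj c j B -> proper_upto V adj' c j B.
Proof. by move=> sadj P S sSV cardS; apply: proper_tree_for_subrel sadj (P S sSV cardS). Qed.

Lemma exists_card_superset V (A : {set T}) n :
  A \subset V -> #|A| + n <= #|V| ->
  exists2 S : {set T}, A \subset S & S \subset V /\ #|S| = #|A| + n.
Proof.
elim: n A => [|n IH] A sAV cardV; first by exists A; rewrite ?addn0.
have /subsetPn [x xV xA] : ~~ (V \subset A).
  by apply/negP => /subset_leq_card; lia.
have [||S sxAS [sSV cardS]] := IH (x |: A).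
- by rewrite subUset sub1set xV.
- by rewrite cardsU1 xA; lia.
exists S; first exact: subset_trans (subsetUr _ _) sxAS.
by split=> //; rewrite cardS cardsU1 xA; lia.
Qed.

(* A tree through two vertices has an edge, and its color is below B. *)
Lemma proper_upto_colors_gt0 V adj c j B :
  2 <= j -> 2 <= #|V| -> proper_upto V adj c j B -> 0 < B.
Proof.
move=> j2 V2 P; have [|S _ [sSV cardS]] := exists_card_superset (n := 2) (sub0set V).
  by rewrite cards0.
have [|W [F [[_ _ _ _ cardF] sSW _ cB]]] := P S sSV _; first by rewrite cardS cards0.
have := subset_leq_card sSW; rewrite cardS cards0 => W2.
have /set0Pn [e /cB ceB] : F != set0 by rewrite -card_gt0 cardF; lia.
lia.
Qed.

(* Colors at least B occur on none of the trees, so they may be reset to 0. *)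
Lemma k_proper_with_of_upto V adj c j B k :
  0 < B -> k <= j -> proper_upto V adj c j B -> k_proper_with V adj k B.
Proof.
move=> B0 kj P; exists (fun e => if c e < B then c e else 0); split.
  by move=> x y _; case: ifP.
move=> S sSV cardS; have [|W [F [tr sSW pr cB]]] := P S sSV _; first by rewrite cardS.
by exists W, F; split=> //; apply: eq_proper_edges pr => e /cB ->.
Qed.

Lemma proper_upto_of_k_proper_with V adj k m :
  k <= #|V| -> k_proper_with V adj k m -> exists c, proper_upto V adj c k m.
Proof.
move=> kV [c [col kp]]; exists c => S sSV cardS.
have [|S' sSS' [sS'V cardS']] := exists_card_superset (n := k - #|S|) sSV; first by lia.
have [|W [F [tr sS'W pr]]] := kp S' sS'V _; first by rewrite cardS'; lia.
exists W, F; split=> //; first exact: subset_trans sS'W.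
by move=> e eF; case: tr => _ _ /(_ e eF) [x [y [-> xy _ _]]] _ _; apply: col.
Qed.

Lemma px_le V adj k m : k_proper_with V adj k m -> px V adj k <= m.
Proof.
move=> km; rewrite /px; case: pselect => [ex|]; last by case; exists m.
by case: ex_minnP => m0 _; apply; apply/asboolP.
Qed.

Lemma px_spec V adj k :
  (exists m, k_proper_with V adj k m) -> k_proper_with V adj k (px V adj k).
Proof. by move=> ex; rewrite /px; case: pselect => // ?; case: ex_minnP => m /asboolP. Qed.

Lemma exists_k_proper_with V adj k :
  simple_graph V adj -> connected_graph V adj -> 2 <= k <= #|V| ->
  exists m, k_proper_with V adj k m.
Proof.
move=> sV cV /andP[k2 kV]; have [x xV] := set0Pn _ cV.1.
have [||c P] := proper_upto_grow sV cV _ _ (@proper_upto_set1 adj (fun=> 0) k x).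
- by rewrite sub1set.
- by apply/set0Pn; exists x; rewrite set11.
rewrite cards1 add0n in P; exists (#|V| - 1); apply: k_proper_with_of_upto P => //; lia.
Qed.

Lemma px_proper_upto V adj k :
  simple_graph V adj -> connected_graph V adj -> 2 <= k <= #|V| ->
  exists c, proper_upto V adj c k (px V adj k).
Proof.
move=> sV cV kV; apply: proper_upto_of_k_proper_with; first by case/andP: kV.
exact/px_spec/exists_k_proper_with.
Qed.

Lemma px_le_of_proper_upto U adj V c j B k :
  simple_graph U adj -> connected_graph U adj -> V \subset U ->
  2 <= j -> 2 <= #|V| -> k <= j -> proper_upto V adj c j B ->
  px U adj k <= B + (#|U| - #|V|).
Proof.
move=> sU cU sVU j2 V2 kj P; have B0 := proper_upto_colors_gt0 j2 V2 P.
have [|c' P'] := proper_upto_grow sU cU sVU _ P; first by rewrite -card_gt0; lia.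
by apply/px_le/(k_proper_with_of_upto _ kj P'); lia.
Qed.

End ProperTrees.

Theorem lemma2p9 (T : finType) (g : rel T) (VH : {set T}) (h : rel T) :
  simple_graph [set: T] g -> connected_graph [set: T] g ->
  simple_graph VH h -> connected_graph VH h ->
  (forall x y, h x y -> g x y) ->
  (forall k, 3 <= k <= #|VH| ->
     px [set: T] g k <= px VH h k + (#|T| - #|VH|)) /\
  (2 <= #|VH| -> forall k, #|VH| <= k <= #|T| ->
     px [set: T] g k <= px VH h #|VH| + (#|T| - #|VH|)).
Proof.
move=> sG cG sH cH hg; rewrite -cardsT; split.
- move=> k /andP[k3 kVH]; have k2 : 2 <= k <= #|VH| by rewrite kVH; lia.
  have [c /(proper_upto_subrel hg) P] := px_proper_upto sH cH k2.
  by apply: (px_le_of_proper_upto sG cG (subsetT VH) _ _ _ P); lia.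
- move=> VH2 k /andP[_ kT]; have VH2' : 2 <= #|VH| <= #|VH| by rewrite VH2 leqnn.
  have [c /(proper_upto_subrel hg)/(proper_upto_full (j := #|[set: T]|)) P] :=
    px_proper_upto sH cH VH2'.
  have VHT := max_card VH; rewrite -cardsT in VHT.
  by apply: (px_le_of_proper_upto sG cG (subsetT VH) _ VH2 _ P); lia.
Qed.
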